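(* Let $f\in\mathbb{C}[[y,t,x]]$, $\lambda\in\mathbb{C}$, and let $P:\mathbb{C}\to\mathbb{C}$ be a monic polynomial. Then there exist $g,h\in\mathbb{C}[[y,t,x]]$ such that $\operatorname{Conv}_\varphi(g)=P^{-1}(\operatorname{Conv}_\varphi(f))$ and $\operatorname{Conv}_\varphi(h)=\lambda\cdot\operatorname{Conv}_\varphi(f)=\{\lambda s: s\in\operatorname{Conv}_\varphi(f)\}$.
   Context: Let $x=(x_1,\dots,x_n)$. A formal power series is convergent if its coefficients satisfy $|a_\alpha|\le C^{|\alpha|}$ for some $C$ and all $\alpha\ne0$. Fix a convergent power series $\varphi(t,x)=\sum_{j\ge1}b_j(x)t^j$ with convergent $b_j(x)\in\mathbb{C}[[x]]$ and $b_1(0)=1$. For $s\in\mathbb{C}$ put $\varphi(s,t,x)=s\,b_1(x)t+\sum_{j\ge2}b_j(x)t^j$. For $f\in\mathbb{C}[[y,t,x]]$, $\operatorname{Conv}_\varphi(f)=\{s\in\mathbb{C}: f(\varphi(s,t,x),t,x)\text{ converges as a power series in }(t,x)\}$. *)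

(* complex numbers as pairs of Stdlib reals; formal power
   series in N variables as functions from multi-indices (lists of
   naturals of length N) to CC. *)
From Stdlib Require Import Reals List.
Import ListNotations.
Open Scope R_scope.

Record CC := mkC { Re : R; Im : R }.
Definition Czero : CC := mkC 0 0.
Definition Cone : CC := mkC 1 0.
Definition Cadd (a b : CC) : CC := mkC (Re a + Re b) (Im a + Im b).
Definition Cmul (a b : CC) : CC :=
  mkC (Re a * Re b - Im a * Im b) (Re a * Im b + Im a * Re b).
Definition Cnorm (a : CC) : R := sqrt (Re a ^ 2 + Im a ^ 2).
Definition Csum (l : list CC) : CC := fold_right Cadd Czero l.

Definition mi_size (a : list nat) : nat := fold_right Nat.add 0%nat a.
Definition mi_is_zero (a : list nat) : bool := forallb (Nat.eqb 0) a.
(* componentwise (truncated) difference *)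
Fixpoint mi_sub (b a : list nat) : list nat :=
  match b, a with
  | x :: b', y :: a' => (x - y)%nat :: mi_sub b' a'
  | _, _ => b
  end.
Fixpoint mi_below (b : list nat) : list (list nat) :=
  match b with
  | [] => [[]]
  | x :: b' => flat_map (fun i => map (cons i) (mi_below b')) (seq 0 (S x))
  end.

(* a series in N variables: only its values on lists of length N matter *)
Definition PS := list nat -> CC.

Definition Convergent (N : nat) (F : PS) : Prop :=
  exists K : R, forall a : list nat, length a = N -> mi_is_zero a = false ->
    Cnorm (F a) <= K ^ (mi_size a).

Definition PSone : PS := fun a => if mi_is_zero a then Cone else Czero.
Definition PSmul (F G : PS) : PS :=
  fun b => Csum (map (fun a => Cmul (F a) (G (mi_sub b a))) (mi_below b)).
Fixpoint PSpow (F : PS) (i : nat) : PS :=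
  match i with O => PSone | S i' => PSmul F (PSpow F i') end.

(* b j is the series b_j(x) in the n variables x (b 0 is ignored).
   Series in (t,x) are indexed by (k :: alpha). *)
Definition phiTX (b : nat -> PS) : PS :=
  fun g => match g with
           | (S j) :: a => b (S j) a
           | _ => Czero
           end.

Definition phiS (b : nat -> PS) (s : CC) : PS :=
  fun g => match g with
           | 1%nat :: a => Cmul s (b 1%nat a)
           | (S (S j)) :: a => b (S (S j)) a
           | _ => Czero
           end.

(* f(phi(s,t,x),t,x) for f in CC[[y,t,x]] (indexed by (i :: k :: alpha)).
   The coefficient of t^m x^beta is the finite sum
     sum_{i <= m} sum_{(k,alpha) <= (m,beta)} f_{i,k,alpha} [t^{m-k} x^{beta-alpha}] phi(s)^i ;
   terms with i > m vanish since phi(s) is divisible by t. *)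
Definition compose (b : nat -> PS) (f : PS) (s : CC) : PS :=
  fun g => match g with
           | [] => Czero
           | m :: _ =>
             Csum (flat_map (fun i =>
               map (fun d => Cmul (f (i :: d)) (PSpow (phiS b s) i (mi_sub g d)))
                   (mi_below g)) (seq 0 (S m)))
           end.

Definition Conv (n : nat) (b : nat -> PS) (f : PS) (s : CC) : Prop :=
  Convergent (S n) (compose b f s).

(* monic polynomial with lower coefficients cs = [c_0; ...; c_{d-1}]:
   P(s) = c_0 + c_1 s + ... + c_{d-1} s^{d-1} + s^d *)
Fixpoint monic_eval (cs : list CC) (s : CC) : CC :=
  match cs with
  | [] => Cone
  | c :: cs' => Cadd c (Cmul s (monic_eval cs' s))
  end.

From Stdlib Require Import Reals List Lra Lia Arith Ring Classical.
Import ListNotations.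
Open Scope R_scope.

(* For fixed (m, beta), the coefficient of t^m x^beta in g(phi(s,t,x),t,x)
   is a polynomial in s of degree <= m: in it the coefficient of s^e is
   g_{e, m-e, beta} plus a combination of coefficients g_{i,k,alpha} of
   strictly smaller total degree, because phi(s)^e = s^e t^e + (higher order
   terms) when b_1(0) = 1.  This triangularity lets us solve for g
   degree by degree, so ANY family q(m, beta) of polynomials with
   deg q(m, beta) <= m is realised as the coefficient family of the
   composition of some g  (lemma [compose_realizes]).

   Both sets in the theorem are then realised by choosing q suitably:
   - for a polynomial Q of degree <= d, take q(d m, beta) = [t^m x^beta] of
     f(phi(Q(s))) (a polynomial of degree <= d m in s) and q = 0 at
     t-degrees not divisible by d; the resulting series is a "dilation" of
     f(phi(Q(s))) and converges iff the latter does, giving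
     Conv(g) = Q^{-1}(Conv(f))  ([realize_substitution]);
   - lambda Conv(f) is Q^{-1}(Conv(f)) with Q(s) = s / lambda when
     lambda <> 0; for lambda = 0 it is {0} or the empty set, realised by
     q(m, beta) = m! s^m and q(m, beta) = m!  ([realize_scaled]).
   The construction only uses b_1(0) = 1. *)

Lemma CC_ext (a c : CC) : Re a = Re c -> Im a = Im c -> a = c.
Proof. destruct a, c; simpl; intros; subst; reflexivity. Qed.

Definition Copp (a : CC) : CC := mkC (- Re a) (- Im a).
Definition Csub (a c : CC) : CC := Cadd a (Copp c).

Lemma CC_ring : ring_theory Czero Cone Cadd Cmul Csub Copp (@eq CC).
Proof.
  constructor; intros; apply CC_ext; unfold Cadd, Cmul, Csub, Copp, Czero, Cone;
    simpl; ring.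
Qed.
Add Ring CCring : CC_ring.

Fixpoint Cpow (s : CC) (m : nat) : CC :=
  match m with O => Cone | S m' => Cmul s (Cpow s m') end.

Definition Cinv (a : CC) : CC :=
  mkC (Re a / (Re a ^ 2 + Im a ^ 2)) (- Im a / (Re a ^ 2 + Im a ^ 2)).

Lemma Cinv_r (a : CC) : a <> Czero -> Cmul a (Cinv a) = Cone.
Proof.
  intros Ha.
  assert (Hd : Re a ^ 2 + Im a ^ 2 <> 0).
  { intro H. apply Ha. destruct a; apply CC_ext; simpl in *; nra. }
  apply CC_ext; unfold Cinv; simpl; field; simpl in Hd; intro HH; apply Hd; nra.
Qed.

Definition cfact (m : nat) : CC := mkC (INR (fact m)) 0.

Lemma Cnorm_ge0 (a : CC) : 0 <= Cnorm a.
Proof. apply sqrt_pos. Qed.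

Lemma Cnorm_zero : Cnorm Czero = 0.
Proof.
  unfold Cnorm; simpl. replace (0 * (0 * 1) + 0 * (0 * 1)) with 0 by ring.
  apply sqrt_0.
Qed.

Lemma Cnorm_eq0 (a : CC) : Cnorm a = 0 -> a = Czero.
Proof.
  destruct a as [a1 a2]; intros H. unfold Cnorm in H; simpl in H.
  apply sqrt_eq_0 in H; [|nra]. apply CC_ext; simpl; nra.
Qed.

Lemma Cnorm_mul (a c : CC) : Cnorm (Cmul a c) = Cnorm a * Cnorm c.
Proof.
  destruct a as [a1 a2], c as [c1 c2]. unfold Cnorm; simpl.
  rewrite <- sqrt_mult by nra. f_equal. ring.
Qed.

Lemma Cnorm_real (r : R) : Cnorm (mkC r 0) = Rabs r.
Proof.
  unfold Cnorm; simpl.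
  replace (r * (r * 1) + 0 * (0 * 1)) with (Rsqr r) by (unfold Rsqr; ring).
  apply sqrt_Rsqr_abs.
Qed.

Lemma Cnorm_pow (s : CC) (m : nat) : Cnorm (Cpow s m) = Cnorm s ^ m.
Proof.
  induction m; simpl.
  - unfold Cnorm; simpl. replace (1 * (1 * 1) + 0 * (0 * 1)) with 1 by ring.
    apply sqrt_1.
  - rewrite Cnorm_mul, IHm. reflexivity.
Qed.

Lemma Cnorm_cfact (m : nat) : Cnorm (cfact m) = INR (fact m).
Proof. unfold cfact. rewrite Cnorm_real. apply Rabs_right, Rle_ge, pos_INR. Qed.

Lemma Csum_app (l1 l2 : list CC) : Csum (l1 ++ l2) = Cadd (Csum l1) (Csum l2).
Proof. induction l1; simpl. ring. rewrite IHl1; ring. Qed.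

Lemma Csum_flat_map {A B : Type} (F : B -> CC) (G : A -> list B) (l : list A) :
  Csum (map F (flat_map G l)) = Csum (map (fun i => Csum (map F (G i))) l).
Proof. induction l; simpl; auto. rewrite map_app, Csum_app, IHl. reflexivity. Qed.

Lemma Csum_map_add {A : Type} (F G : A -> CC) (l : list A) :
  Csum (map (fun x => Cadd (F x) (G x)) l) = Cadd (Csum (map F l)) (Csum (map G l)).
Proof. induction l; simpl. ring. rewrite IHl; ring. Qed.

Lemma Csum_ext_in {A : Type} (F G : A -> CC) (l : list A) :
  (forall x, In x l -> F x = G x) -> Csum (map F l) = Csum (map G l).
Proof. intros H. f_equal. apply map_ext_in. auto. Qed.

Lemma Csum_zero {A : Type} (F : A -> CC) (l : list A) :
  (forall x, In x l -> F x = Czero) -> Csum (map F l) = Czero.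
Proof.
  induction l; intros H; simpl; auto.
  rewrite H, IHl; [ring | intros; apply H; simpl; auto | simpl; auto].
Qed.

Lemma Csum_seq_indicator (len a y : nat) (v : CC) : (a <= y < a + len)%nat ->
  Csum (map (fun i => if Nat.eq_dec i y then v else Czero) (seq a len)) = v.
Proof.
  revert a; induction len; intros a Hy; simpl; [lia|].
  destruct (Nat.eq_dec a y).
  - subst. rewrite Csum_zero; [ring|]. intros x Hx. apply in_seq in Hx.
    destruct (Nat.eq_dec x y); [lia|auto].
  - rewrite IHlen by lia. ring.
Qed.

(** * Polynomials in s, as coefficient lists (constant term first) *)

Fixpoint peval (p : list CC) (s : CC) : CC :=
  match p with [] => Czero | a :: p' => Cadd a (Cmul s (peval p' s)) end.
Definition pcoef (p : list CC) (e : nat) : CC := nth e p Czero.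

Fixpoint padd (p q : list CC) : list CC :=
  match p, q with
  | [], _ => q
  | _, [] => p
  | a :: p', c :: q' => Cadd a c :: padd p' q'
  end.
Definition pscale (a : CC) (p : list CC) : list CC := map (Cmul a) p.
Definition pshift (p : list CC) : list CC :=
  match p with [] => [] | _ => Czero :: p end.
Fixpoint pmul (p q : list CC) : list CC :=
  match p with [] => [] | a :: p' => padd (pscale a q) (pshift (pmul p' q)) end.
Fixpoint psum (l : list (list CC)) : list CC :=
  match l with [] => [] | p :: l' => padd p (psum l') end.
Fixpoint pcomp (p P : list CC) : list CC :=
  match p with [] => [] | a :: p' => padd [a] (pmul P (pcomp p' P)) end.

Lemma peval_padd (p q : list CC) (s : CC) :
  peval (padd p q) s = Cadd (peval p s) (peval q s).
Proof. revert q; induction p; destruct q; simpl; try rewrite IHp; ring. Qed.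

Lemma peval_pscale (a : CC) (p : list CC) (s : CC) :
  peval (pscale a p) s = Cmul a (peval p s).
Proof. induction p; simpl in *; try rewrite IHp; ring. Qed.

Lemma peval_pshift (p : list CC) (s : CC) : peval (pshift p) s = Cmul s (peval p s).
Proof. destruct p; simpl; ring. Qed.

Lemma peval_pmul (p q : list CC) (s : CC) :
  peval (pmul p q) s = Cmul (peval p s) (peval q s).
Proof.
  induction p; cbn [pmul]; [simpl; ring|].
  rewrite peval_padd, peval_pscale, peval_pshift, IHp. simpl; ring.
Qed.

Lemma peval_psum (l : list (list CC)) (s : CC) :
  peval (psum l) s = Csum (map (fun p => peval p s) l).
Proof. induction l; cbn [psum]; [simpl; ring|]. rewrite peval_padd, IHl. reflexivity. Qed.

Lemma peval_pcomp (p P : list CC) (s : CC) : peval (pcomp p P) s = peval p (peval P s).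
Proof.
  induction p; cbn [pcomp]; [simpl; ring|].
  rewrite peval_padd, peval_pmul, IHp. simpl. ring.
Qed.

Lemma peval_monomial (m : nat) (c s : CC) :
  peval (repeat Czero m ++ [c]) s = Cmul c (Cpow s m).
Proof. induction m; simpl. ring. rewrite IHm. ring. Qed.

Lemma monic_eval_peval (cs : list CC) (s : CC) : monic_eval cs s = peval (cs ++ [Cone]) s.
Proof. induction cs; simpl. ring. rewrite IHcs. reflexivity. Qed.

Lemma pcoef_nil (e : nat) : pcoef [] e = Czero.
Proof. destruct e; reflexivity. Qed.

Lemma pcoef_len (p : list CC) (e : nat) : (length p <= e)%nat -> pcoef p e = Czero.
Proof. apply nth_overflow. Qed.

Lemma pcoef_padd (p q : list CC) (e : nat) :
  pcoef (padd p q) e = Cadd (pcoef p e) (pcoef q e).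
Proof.
  revert q e; induction p; destruct q; intros e; simpl; try (rewrite pcoef_nil; ring).
  unfold pcoef in *; destruct e; simpl; [reflexivity | apply IHp].
Qed.

Lemma pcoef_pscale (a : CC) (p : list CC) (e : nat) :
  pcoef (pscale a p) e = Cmul a (pcoef p e).
Proof.
  revert e; induction p; intros e; [simpl; rewrite pcoef_nil; ring|].
  unfold pcoef in *; destruct e; simpl; [reflexivity | apply IHp].
Qed.

Lemma pcoef_pshift0 (p : list CC) : pcoef (pshift p) 0 = Czero.
Proof. destruct p; reflexivity. Qed.

Lemma pcoef_pshiftS (p : list CC) (e : nat) : pcoef (pshift p) (S e) = pcoef p e.
Proof. destruct p; unfold pcoef; simpl; auto. destruct e; reflexivity. Qed.

Lemma pcoef_psum (l : list (list CC)) (e : nat) :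
  pcoef (psum l) e = Csum (map (fun p => pcoef p e) l).
Proof. induction l; cbn [psum]. apply pcoef_nil. rewrite pcoef_padd, IHl. reflexivity. Qed.

Lemma pmul_zero_r (p q : list CC) : (forall e, pcoef q e = Czero) ->
  forall e, pcoef (pmul p q) e = Czero.
Proof.
  intros Hq; induction p; intros e; cbn [pmul]; [apply pcoef_nil|].
  rewrite pcoef_padd, pcoef_pscale, Hq. destruct e.
  - rewrite pcoef_pshift0; ring.
  - rewrite pcoef_pshiftS, IHp; ring.
Qed.

Lemma pmul_nil_r (p : list CC) : pmul p [] = [].
Proof. induction p; simpl; auto. rewrite IHp; reflexivity. Qed.

(* A polynomial is determined by its coefficients, whatever its length. *)
Lemma peval_zero (q : list CC) (s : CC) :
  (forall e, pcoef q e = Czero) -> peval q s = Czero.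
Proof.
  induction q as [|a q IH]; intros H; simpl; [reflexivity|].
  assert (Ha : a = Czero) by exact (H 0%nat). subst a.
  rewrite IH; [ring | intros e; apply (H (S e))].
Qed.

Lemma peval_coef_ext (p q : list CC) (s : CC) :
  (forall e, pcoef p e = pcoef q e) -> peval p s = peval q s.
Proof.
  revert q; induction p as [|a p IH]; intros q H.
  - simpl. symmetry. apply peval_zero. intros e. rewrite <- H. apply pcoef_nil.
  - destruct q as [|c q].
    + apply peval_zero. intros e. rewrite H. apply pcoef_nil.
    + simpl. rewrite (IH q) by (intros e; apply (H (S e))).
      replace c with a by exact (H 0%nat). reflexivity.
Qed.

(** Degree bounds, in the form length <= degree + 1. *)

Lemma length_padd (p q : list CC) : length (padd p q) = Nat.max (length p) (length q).
Proof. revert q; induction p; destruct q; simpl; auto. Qed.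

Lemma length_pmul (p q : list CC) : (length (pmul p q) <= Nat.pred (length p + length q))%nat.
Proof.
  revert q; induction p; intros q; cbn [pmul]; [simpl; lia|].
  destruct q as [|c q]; [rewrite pmul_nil_r; simpl; lia|].
  rewrite length_padd. unfold pscale. rewrite length_map.
  specialize (IHp (c :: q)). destruct (pmul p (c :: q)); simpl in *; lia.
Qed.

Lemma length_psum (l : list (list CC)) (k : nat) :
  (forall p, In p l -> (length p <= k)%nat) -> (length (psum l) <= k)%nat.
Proof.
  induction l as [|a l IH]; intros H; cbn [psum]; [simpl; lia|].
  rewrite length_padd.
  assert (length a <= k)%nat by (apply H; left; auto).
  assert (length (psum l) <= k)%nat by (apply IH; intros; apply H; right; auto).
  lia.
Qed.

Lemma length_pcomp (p P : list CC) (d : nat) : (length P <= S d)%nat ->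
  (length (pcomp p P) <= S (d * Nat.pred (length p)))%nat.
Proof.
  intros HP; induction p as [|a p IH]; cbn [pcomp]; [simpl; lia|].
  destruct p as [|a' p'].
  - cbn [pcomp]. rewrite pmul_nil_r. simpl. lia.
  - rewrite length_padd. pose proof (length_pmul P (pcomp (a' :: p') P)).
    simpl length in *. simpl Nat.pred in *. nia.
Qed.

Fixpoint mle (a c : list nat) : Prop :=
  match a, c with
  | [], [] => True
  | x :: a', y :: c' => (x <= y)%nat /\ mle a' c'
  | _, _ => False
  end.

Lemma in_mi_below (c a : list nat) : In a (mi_below c) -> mle a c.
Proof.
  revert a; induction c as [|x c IH]; intros a H; cbn [mi_below] in H.
  - destruct H as [H|[]]. subst; simpl; auto.
  - apply in_flat_map in H. destruct H as [i [Hi Ha]]. apply in_map_iff in Ha.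
    destruct Ha as [a' [<- Ha']]. apply in_seq in Hi. simpl. split; [lia | auto].
Qed.

Lemma mle_refl (c : list nat) : mle c c.
Proof. induction c; simpl; auto. Qed.

Lemma mle_size (a c : list nat) : mle a c -> (mi_size a <= mi_size c)%nat.
Proof. revert c; induction a; destruct c; simpl; intuition. specialize (IHa c H1). lia. Qed.

Lemma mle_size_eq (a c : list nat) : mle a c -> mi_size a = mi_size c -> a = c.
Proof.
  revert c; induction a as [|x a IH]; destruct c as [|y c]; simpl; intuition.
  pose proof (mle_size _ _ H2). assert (x = y) by lia. subst. f_equal. apply IH; auto. lia.
Qed.

Lemma mi_sub_self (c : list nat) : mi_sub c c = repeat 0%nat (length c).
Proof. induction c; simpl; auto. rewrite IHc. f_equal. lia. Qed.

Lemma mi_below_zero (n : nat) : mi_below (repeat 0%nat n) = [repeat 0%nat n].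
Proof. induction n; simpl; auto. rewrite IHn. reflexivity. Qed.

Lemma mi_is_zero_repeat (n : nat) : mi_is_zero (repeat 0%nat n) = true.
Proof. induction n; simpl; auto. Qed.

Lemma mi_size_repeat (n : nat) : mi_size (repeat 0%nat n) = 0%nat.
Proof. induction n; simpl; auto. Qed.

Lemma mi_is_zero_cons (x : nat) (l : list nat) :
  mi_is_zero (x :: l) = andb (Nat.eqb 0 x) (mi_is_zero l).
Proof. reflexivity. Qed.

Lemma Csum_below_indicator (c D : list nat) (v : CC) : mle D c ->
  Csum (map (fun d => if list_eq_dec Nat.eq_dec d D then v else Czero) (mi_below c)) = v.
Proof.
  revert D; induction c as [|x c IH]; intros D H.
  - destruct D; simpl in H; [|contradiction]. simpl.
    destruct (list_eq_dec Nat.eq_dec [] []); [ring | congruence].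
  - destruct D as [|y D']; simpl in H; [contradiction|]. destruct H as [Hy HD].
    cbn [mi_below]. rewrite Csum_flat_map.
    rewrite (Csum_ext_in _ (fun i => if Nat.eq_dec i y then v else Czero)).
    { apply Csum_seq_indicator; lia. }
    intros i _. rewrite map_map. destruct (Nat.eq_dec i y).
    + subst. etransitivity; [|apply (IH D' HD)]. apply Csum_ext_in. intros d _.
      destruct (list_eq_dec Nat.eq_dec (y :: d) (y :: D')),
               (list_eq_dec Nat.eq_dec d D'); congruence.
    + apply Csum_zero. intros d _.
      destruct (list_eq_dec Nat.eq_dec (i :: d) (y :: D')); congruence.
Qed.

Lemma map_flat_map_map {A B C D : Type} (H : C -> D) (F : A -> B -> C) (L : list B) (l : list A) :
  map H (flat_map (fun i => map (F i) L) l) = flat_map (fun i => map (fun d => H (F i d)) L) l.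
Proof. induction l; simpl; auto. rewrite map_app, IHl, map_map. reflexivity. Qed.

(** * The composition f(phi(s,t,x),t,x) as a polynomial in s *)

(* [phi_poly b g] is the coefficient of phi(s,t,x) at g, as a polynomial in s *)
Definition phi_poly (b : nat -> PS) (g : list nat) : list CC :=
  match g with
  | 1%nat :: a => [Czero; b 1%nat a]
  | (S (S j)) :: a => [b (S (S j)) a]
  | _ => []
  end.
Definition one_poly (a : list nat) : list CC := if mi_is_zero a then [Cone] else [].
Definition mul_poly (F G : list nat -> list CC) (c : list nat) : list CC :=
  psum (map (fun a => pmul (F a) (G (mi_sub c a))) (mi_below c)).
Fixpoint phi_pow_poly (b : nat -> PS) (i : nat) : list nat -> list CC :=
  match i with O => one_poly | S i' => mul_poly (phi_poly b) (phi_pow_poly b i') end.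
Definition compose_poly (b : nat -> PS) (f : PS) (g : list nat) : list CC :=
  match g with
  | [] => []
  | m :: _ =>
    psum (flat_map (fun i =>
      map (fun d => pscale (f (i :: d)) (phi_pow_poly b i (mi_sub g d))) (mi_below g))
      (seq 0 (S m)))
  end.

Lemma phi_pow_poly_eval (b : nat -> PS) (s : CC) (i : nat) (g : list nat) :
  peval (phi_pow_poly b i g) s = PSpow (phiS b s) i g.
Proof.
  revert g; induction i; intros g; simpl.
  - unfold one_poly, PSone. destruct (mi_is_zero g); simpl; ring.
  - unfold mul_poly, PSmul. rewrite peval_psum, map_map. f_equal. apply map_ext.
    intros a. rewrite peval_pmul, IHi.
    destruct a as [|[|[|j]] a]; simpl; f_equal; ring.
Qed.

Lemma compose_eval (b : nat -> PS) (f : PS) (s : CC) (m : nat) (bt : list nat) :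
  compose b f s (m :: bt) = peval (compose_poly b f (m :: bt)) s.
Proof.
  unfold compose, compose_poly. rewrite peval_psum, map_flat_map_map.
  f_equal. apply flat_map_ext. intros i. apply map_ext. intros d.
  rewrite peval_pscale, phi_pow_poly_eval. reflexivity.
Qed.

Lemma length_phi_pow_poly (b : nat -> PS) (i : nat) (g : list nat) :
  (length (phi_pow_poly b i g) <= S i)%nat.
Proof.
  revert g; induction i; intros g; simpl.
  - unfold one_poly. destruct (mi_is_zero g); simpl; lia.
  - unfold mul_poly. apply length_psum. intros p Hp. apply in_map_iff in Hp.
    destruct Hp as [a [<- _]]. eapply Nat.le_trans; [apply length_pmul|].
    specialize (IHi (mi_sub g a)).
    assert (length (phi_poly b a) <= 2)%nat by (destruct a as [|[|[|j]] a]; simpl; lia).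
    lia.
Qed.

Lemma length_compose_poly (b : nat -> PS) (f : PS) (m : nat) (bt : list nat) :
  (length (compose_poly b f (m :: bt)) <= S m)%nat.
Proof.
  unfold compose_poly. apply length_psum. intros p Hp.
  apply in_flat_map in Hp. destruct Hp as [i [Hi Hp]]. apply in_map_iff in Hp.
  destruct Hp as [d [<- _]]. unfold pscale. rewrite length_map. apply in_seq in Hi.
  pose proof (length_phi_pow_poly b i (mi_sub (m :: bt) d)). lia.
Qed.

(** Triangularity: phi is divisible by t, and its t-linear part is s t at x = 0. *)

Lemma phi_pow_poly_low (b : nat -> PS) (i j : nat) (dl : list nat) (e : nat) :
  (j < i)%nat -> pcoef (phi_pow_poly b i (j :: dl)) e = Czero.
Proof.
  revert j dl e; induction i; intros j dl e Hj; [lia|].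
  simpl. unfold mul_poly. rewrite pcoef_psum, map_map. apply Csum_zero.
  intros a Ha. apply in_mi_below in Ha. destruct a as [|j1 a]; simpl in Ha; [contradiction|].
  destruct Ha as [Hj1 _]. destruct j1 as [|j1].
  - simpl. apply pcoef_nil.
  - apply pmul_zero_r. intros e'. simpl mi_sub. apply IHi. lia.
Qed.

Lemma phi_pow_poly_diag (b : nat -> PS) (n : nat) :
  b 1%nat (repeat 0%nat n) = Cone ->
  forall i e, pcoef (phi_pow_poly b i (i :: repeat 0%nat n)) e =
              if Nat.eq_dec e i then Cone else Czero.
Proof.
  intros Hb1. induction i; intros e.
  - simpl. unfold one_poly. simpl. rewrite mi_is_zero_repeat. simpl.
    destruct e as [|[|e]]; reflexivity.
  - simpl. unfold mul_poly. rewrite pcoef_psum, map_map.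
    cbn [mi_below]. rewrite mi_below_zero, Csum_flat_map.
    rewrite (Csum_ext_in _ (fun j => if Nat.eq_dec j 1
                                     then (if Nat.eq_dec e (S i) then Cone else Czero)
                                     else Czero)).
    { apply Csum_seq_indicator. lia. }
    intros j Hj. simpl. rewrite mi_sub_self, repeat_length. apply in_seq in Hj.
    destruct j as [|[|j]].
    + simpl. rewrite pcoef_nil. ring.
    + simpl phi_poly. rewrite Nat.sub_0_r, Hb1.
      cbn [pmul]. change (pshift []) with (@nil CC).
      rewrite pcoef_padd, pcoef_pscale. destruct e.
      * rewrite pcoef_pshift0. destruct (Nat.eq_dec 0 (S i)); [lia|]. simpl; ring.
      * rewrite pcoef_pshiftS, pcoef_padd, pcoef_pscale, pcoef_nil, (IHi e).
        destruct (Nat.eq_dec e i), (Nat.eq_dec (S e) (S i)); try lia; simpl; ring.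
    + rewrite pmul_zero_r; [simpl; ring|].
      intros e'. apply phi_pow_poly_low. lia.
Qed.

(** * Realising any family of polynomials of degree <= m *)

Definition compose_term (b : nat -> PS) (G : PS) (m : nat) (bt : list nat) (e : nat)
    (idx : list nat) : CC :=
  match idx with
  | i :: d => Cmul (G idx) (pcoef (phi_pow_poly b i (mi_sub (m :: bt) d)) e)
  | [] => Czero
  end.

Definition compose_coef (b : nat -> PS) (G : PS) (m : nat) (bt : list nat) (e : nat) : CC :=
  Csum (map (compose_term b G m bt e) (mi_below (m :: m :: bt))).

Lemma pcoef_compose_poly (b : nat -> PS) (G : PS) (m : nat) (bt : list nat) (e : nat) :
  pcoef (compose_poly b G (m :: bt)) e = compose_coef b G m bt e.
Proof.
  unfold compose_poly, compose_coef. rewrite pcoef_psum, map_flat_map_map.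
  cbn [mi_below]. rewrite map_flat_map_map. f_equal. apply flat_map_ext.
  intros i. apply map_ext. intros d. apply pcoef_pscale.
Qed.

Lemma compose_coef_high (b : nat -> PS) (G : PS) (m : nat) (bt : list nat) (e : nat) :
  (m < e)%nat -> compose_coef b G m bt e = Czero.
Proof.
  intros He. apply Csum_zero. intros [|i d] Hidx; [reflexivity|].
  apply in_mi_below in Hidx. destruct Hidx as [Hi _]. unfold compose_term.
  rewrite pcoef_len; [ring|].
  pose proof (length_phi_pow_poly b i (mi_sub (m :: bt) d)). lia.
Qed.

Section Triangular.
Variable (b : nat -> PS) (n : nat).
Hypothesis Hb1 : b 1%nat (repeat 0%nat n) = Cone.

(* Modifying G at indices of total size >= w = m + |bt| only affects
   [s^e t^m x^bt] G(phi) through the single diagonal index (e, m-e, bt). *)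
Lemma compose_term_split (G H : PS) (m : nat) (bt : list nat) (e : nat) (idx : list nat) :
  length bt = n -> (e <= m)%nat -> In idx (mi_below (m :: m :: bt)) ->
  (forall a, (mi_size a < m + mi_size bt)%nat -> G a = H a) ->
  (forall a, (m + mi_size bt <= mi_size a)%nat -> H a = Czero) ->
  compose_term b G m bt e idx =
  Cadd (compose_term b H m bt e idx)
       (if list_eq_dec Nat.eq_dec idx (e :: (m - e)%nat :: bt) then G idx else Czero).
Proof.
  intros Hbt Hem Hidx Hlow Hhigh. apply in_mi_below in Hidx.
  destruct idx as [|i [|k al]]; simpl in Hidx; try tauto.
  destruct Hidx as [Hi [Hk Hal]]. simpl compose_term.
  destruct (list_eq_dec Nat.eq_dec (i :: k :: al) (e :: (m - e)%nat :: bt)) as [Heq|Hne].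
  - injection Heq as -> -> ->. rewrite mi_sub_self, Hbt.
    replace (m - (m - e))%nat with e by lia.
    rewrite (phi_pow_poly_diag b n Hb1), (Hhigh (e :: (m - e)%nat :: bt)) by (simpl; lia).
    destruct (Nat.eq_dec e e); [ring | congruence].
  - destruct (lt_dec (mi_size (i :: k :: al)) (m + mi_size bt)) as [Hlt|Hge].
    { rewrite Hlow by auto. ring. }
    rewrite (Hhigh (i :: k :: al)) by lia.
    destruct (le_lt_dec (i + k) m) as [Hik|Hik].
    + (* the size forces (i, k, al) to be a diagonal index (i, m - i, bt) *)
      pose proof (mle_size _ _ Hal). simpl in Hge.
      assert (Hal' : al = bt) by (apply mle_size_eq; auto; lia). subst al.
      rewrite mi_sub_self, Hbt. replace (m - k)%nat with i by lia.
      rewrite (phi_pow_poly_diag b n Hb1).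
      destruct (Nat.eq_dec e i); [|ring].
      exfalso. apply Hne. f_equal; [auto | f_equal; lia].
    + rewrite phi_pow_poly_low by lia. ring.
Qed.

Lemma compose_coef_split (G H : PS) (m : nat) (bt : list nat) (e : nat) :
  length bt = n -> (e <= m)%nat ->
  (forall a, (mi_size a < m + mi_size bt)%nat -> G a = H a) ->
  (forall a, (m + mi_size bt <= mi_size a)%nat -> H a = Czero) ->
  compose_coef b G m bt e = Cadd (compose_coef b H m bt e) (G (e :: (m - e)%nat :: bt)).
Proof.
  intros Hbt Hem Hlow Hhigh. unfold compose_coef.
  rewrite (Csum_ext_in _ _ _ (fun idx Hidx =>
             compose_term_split G H m bt e idx Hbt Hem Hidx Hlow Hhigh)).
  rewrite Csum_map_add. f_equal.
  etransitivity; [|apply (Csum_below_indicator (m :: m :: bt) (e :: (m - e)%nat :: bt))].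
  - apply Csum_ext_in. intros idx _.
    destruct (list_eq_dec Nat.eq_dec idx (e :: (m - e)%nat :: bt)); subst; reflexivity.
  - simpl. repeat split; try lia. apply mle_refl.
Qed.

(* The solution of the triangular system, built by recursion on the total
   size w: [sol_trunc q w] agrees with the solution on indices of size < w
   and vanishes elsewhere; the value at (e, k, al) is chosen so that the
   coefficient of s^e at (e + k, al) comes out as prescribed by q. *)
Definition sol_step (q : nat -> list nat -> list CC) (G : PS) (idx : list nat) : CC :=
  match idx with
  | i :: k :: al => Csub (pcoef (q (i + k)%nat al) i) (compose_coef b G (i + k)%nat al i)
  | _ => Czero
  end.
Fixpoint sol_trunc (q : nat -> list nat -> list CC) (w : nat) : PS :=
  match w with
  | O => fun _ => Czero
  | S w' => fun idx => if Nat.eq_dec (mi_size idx) w'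
                       then sol_step q (sol_trunc q w') idx else sol_trunc q w' idx
  end.
Definition sol (q : nat -> list nat -> list CC) : PS :=
  fun idx => sol_trunc q (S (mi_size idx)) idx.

Lemma sol_trunc_high (q : nat -> list nat -> list CC) (w : nat) (idx : list nat) :
  (w <= mi_size idx)%nat -> sol_trunc q w idx = Czero.
Proof.
  induction w; intros H; simpl; auto.
  destruct (Nat.eq_dec (mi_size idx) w); [lia|]. apply IHw. lia.
Qed.

Lemma sol_trunc_low (q : nat -> list nat -> list CC) (w : nat) (idx : list nat) :
  (mi_size idx < w)%nat -> sol_trunc q w idx = sol q idx.
Proof.
  induction w; intros H; [lia|]. unfold sol.
  destruct (Nat.eq_dec (mi_size idx) w) as [<-|Hne]; [reflexivity|].
  simpl. destruct (Nat.eq_dec (mi_size idx) w); [lia|]. apply IHw. lia.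
Qed.

Lemma sol_unfold (q : nat -> list nat -> list CC) (idx : list nat) :
  sol q idx = sol_step q (sol_trunc q (mi_size idx)) idx.
Proof.
  unfold sol. simpl. destruct (Nat.eq_dec (mi_size idx) (mi_size idx)); congruence.
Qed.

Lemma sol_coef (q : nat -> list nat -> list CC) :
  (forall m bt, (length (q m bt) <= S m)%nat) ->
  forall m bt e, length bt = n -> compose_coef b (sol q) m bt e = pcoef (q m bt) e.
Proof.
  intros Hq m bt e Hbt.
  destruct (le_lt_dec e m) as [Hem|Hem].
  2:{ rewrite compose_coef_high, pcoef_len by (try specialize (Hq m bt); lia). reflexivity. }
  set (w := (m + mi_size bt)%nat).
  rewrite (compose_coef_split (sol q) (sol_trunc q w)); auto.
  2:{ intros a Ha. symmetry. apply sol_trunc_low. auto. }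
  2:{ intros a Ha. apply sol_trunc_high. auto. }
  rewrite sol_unfold. simpl sol_step.
  replace (e + (m - e))%nat with m by lia.
  replace (e + (m - e + mi_size bt))%nat with w by (unfold w; lia).
  unfold Csub. ring.
Qed.

Lemma compose_realizes (q : nat -> list nat -> list CC) :
  (forall m bt, (length (q m bt) <= S m)%nat) ->
  exists g : PS, forall s m bt, length bt = n -> compose b g s (m :: bt) = peval (q m bt) s.
Proof.
  intros Hq. exists (sol q). intros s m bt Hbt.
  rewrite compose_eval. apply peval_coef_ext. intros e.
  rewrite pcoef_compose_poly. apply sol_coef; auto.
Qed.

End Triangular.

(** * Convergence *)

Lemma convergent_bound (N : nat) (F : PS) : Convergent N F -> exists M, 1 <= M /\
  forall a, length a = N -> mi_is_zero a = false -> Cnorm (F a) <= M ^ mi_size a.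
Proof.
  intros [K HK]. exists (Rmax 1 (Rabs K)). split; [apply Rmax_l|].
  intros a Ha Hz. eapply Rle_trans; [apply HK; auto|].
  eapply Rle_trans; [apply pow_Rabs|].
  apply pow_incr. split; [apply Rabs_pos | apply Rmax_r].
Qed.

Lemma convergent_dilate (N d : nat) (F G : PS) : (1 <= d)%nat ->
  (forall m bt, length bt = N -> G ((d * m)%nat :: bt) = F (m :: bt)) ->
  (forall m bt, length bt = N -> (m mod d <> 0)%nat -> G (m :: bt) = Czero) ->
  Convergent (S N) G <-> Convergent (S N) F.
Proof.
  intros Hd HGF HG0. split; intros Hc; apply convergent_bound in Hc;
    destruct Hc as [M [HM HMb]].
  - exists (M ^ d). intros [|m bt] Ha Hz; simpl in Ha; [lia|]. injection Ha as Ha.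
    rewrite <- HGF by auto. rewrite <- pow_mult.
    eapply Rle_trans; [apply HMb; simpl; auto|].
    + rewrite mi_is_zero_cons in *. destruct m; simpl in Hz |- *.
      * rewrite Nat.mul_0_r. simpl. auto.
      * destruct (d * S m)%nat eqn:E; [lia | reflexivity].
    + apply Rle_pow; auto. simpl. nia.
  - exists M. intros [|m bt] Ha Hz; simpl in Ha; [lia|]. injection Ha as Ha.
    destruct (Nat.eq_dec (m mod d) 0) as [Hm|Hm].
    + pose proof (Nat.div_mod_eq m d) as Hdm. rewrite Hm, Nat.add_0_r in Hdm.
      rewrite Hdm, HGF by auto. eapply Rle_trans; [apply HMb; simpl; auto|].
      * rewrite mi_is_zero_cons in *. destruct (m / d)%nat; simpl in Hz |- *; auto.
        rewrite Nat.mul_0_r in Hdm. subst m. auto.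
      * apply Rle_pow; auto. simpl. nia.
    + rewrite HG0, Cnorm_zero by auto. apply pow_le. lra.
Qed.

Lemma fact_dominates (M r : R) : 0 < r ->
  exists m, (1 <= m)%nat /\ M ^ m < INR (fact m) * r ^ m.
Proof.
  intros Hr. set (x := Rabs M / r).
  destruct (cv_speed_pow_fact x 1 Rlt_0_1) as [N HN].
  exists (S N). split; [lia|].
  specialize (HN (S N) ltac:(lia)). unfold R_dist in HN. rewrite Rminus_0_r in HN.
  pose proof (Rle_abs (x ^ S N / INR (fact (S N)))).
  pose proof (INR_fact_lt_0 (S N)).
  assert (Hx : x ^ S N < INR (fact (S N))).
  { apply (Rmult_lt_reg_r (/ INR (fact (S N)))); [apply Rinv_0_lt_compat; auto|].
    rewrite Rinv_r by lra. unfold Rdiv in H at 2. lra. }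
  eapply Rle_lt_trans; [apply pow_Rabs|].
  replace (Rabs M) with (x * r) by (unfold x; field; lra).
  rewrite Rpow_mult_distr. apply Rmult_lt_compat_r; [apply pow_lt|]; auto.
Qed.

Lemma factorial_not_convergent (N : nat) (F : PS) (r : R) : 0 < r ->
  (forall m, INR (fact m) * r ^ m <= Cnorm (F (m :: repeat 0%nat N))) ->
  ~ Convergent (S N) F.
Proof.
  intros Hr HF Hc. apply convergent_bound in Hc. destruct Hc as [M [_ HMb]].
  destruct (fact_dominates M r Hr) as [m [Hm Hlt]].
  assert (Hb := HMb (m :: repeat 0%nat N)).
  simpl mi_size in Hb. rewrite mi_size_repeat, Nat.add_0_r in Hb.
  specialize (HF m). simpl in Hb. rewrite repeat_length in Hb.
  assert (Cnorm (F (m :: repeat 0%nat N)) <= M ^ m).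
  { apply Hb; [reflexivity|]. rewrite mi_is_zero_repeat. destruct m; [lia|reflexivity]. }
  lra.
Qed.

Section Realizations.
Variable (b : nat -> PS) (n : nat).
Hypothesis Hb1 : b 1%nat (repeat 0%nat n) = Cone.

(* Conv(g) = Q^{-1}(Conv(f)) for any polynomial Q: with d >= deg Q, the
   coefficient of t^(d m) x^bt in g(phi(s)) is that of t^m x^bt in
   f(phi(Q(s))), a polynomial of degree <= d m in s. *)
Lemma realize_substitution (f : PS) (Q : list CC) :
  exists g : PS, forall s, Conv n b g s <-> Conv n b f (peval Q s).
Proof.
  set (d := S (length Q)).
  destruct (compose_realizes b n Hb1 (fun m bt =>
              if Nat.eq_dec (m mod d) 0
              then pcomp (compose_poly b f ((m / d)%nat :: bt)) Q else []))
    as [g Hg].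
  { intros m bt. destruct (Nat.eq_dec (m mod d) 0); [|simpl; lia].
    eapply Nat.le_trans; [apply (length_pcomp _ Q d); unfold d; lia|].
    pose proof (length_compose_poly b f (m / d) bt).
    pose proof (Nat.Div0.mul_div_le m d). nia. }
  exists g. intros s. apply (convergent_dilate n d); [unfold d; lia| |].
  - intros m bt Hbt. rewrite Hg by auto.
    rewrite Nat.mul_comm, Nat.Div0.mod_mul, Nat.div_mul by (unfold d; lia).
    destruct (Nat.eq_dec 0 0); [|congruence].
    rewrite peval_pcomp, compose_eval. reflexivity.
  - intros m bt Hbt Hm. rewrite Hg by auto.
    destruct (Nat.eq_dec (m mod d) 0); [congruence | reflexivity].
Qed.

(* Conv(h) = {0}: take [t^m x^bt] h(phi(s)) = m! s^m. *)
Lemma realize_zero : exists h : PS, forall s, Conv n b h s <-> s = Czero.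
Proof.
  destruct (compose_realizes b n Hb1 (fun m _ => repeat Czero m ++ [cfact m])) as [h Hh].
  { intros m bt. rewrite length_app, repeat_length. simpl; lia. }
  exists h. intros s. split.
  - intros Hc. apply NNPP. intros Hs.
    apply (factorial_not_convergent n _ (Cnorm s)) in Hc; auto.
    + destruct (Cnorm_ge0 s) as [|H0]; auto. exfalso. apply Hs, Cnorm_eq0; auto.
    + intros m. rewrite Hh by apply repeat_length.
      rewrite peval_monomial, Cnorm_mul, Cnorm_cfact, Cnorm_pow. lra.
  - intros ->. exists 1. intros [|m bt] Ha Hz; simpl in Ha; [lia|]. injection Ha as Ha.
    rewrite Hh, peval_monomial, pow1 by auto. destruct m as [|m]; simpl Cpow.
    + replace (Cmul (cfact 0) Cone) with (cfact 0) by ring.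
      rewrite Cnorm_cfact. simpl. lra.
    + replace (Cmul (cfact (S m)) (Cmul Czero (Cpow Czero m))) with Czero by ring.
      rewrite Cnorm_zero. lra.
Qed.

(* Conv(h) is empty: take [t^m x^bt] h(phi(s)) = m!. *)
Lemma realize_empty : exists h : PS, forall s, ~ Conv n b h s.
Proof.
  destruct (compose_realizes b n Hb1 (fun m _ => [cfact m])) as [h Hh].
  { intros m bt. simpl; lia. }
  exists h. intros s. apply (factorial_not_convergent n _ 1 Rlt_0_1).
  intros m. rewrite Hh by apply repeat_length. simpl peval.
  replace (Cadd (cfact m) (Cmul s Czero)) with (cfact m) by ring.
  rewrite Cnorm_cfact, pow1. lra.
Qed.

(* Conv(h) = lam Conv(f): a substitution s / lam when lam <> 0, and one of
   the two sets above when lam = 0. *)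
Lemma realize_scaled (f : PS) (lam : CC) :
  exists h : PS, forall s, Conv n b h s <-> exists s', Conv n b f s' /\ s = Cmul lam s'.
Proof.
  destruct (classic (lam = Czero)) as [->|Hlam].
  - destruct (classic (exists s0, Conv n b f s0)) as [[s0 Hs0]|Hnone].
    + destruct realize_zero as [h Hh]. exists h. intros s. rewrite Hh. split.
      * intros ->. exists s0. split; [auto | ring].
      * intros [s' [_ ->]]. ring.
    + destruct realize_empty as [h Hh]. exists h. intros s. split.
      * intros Hc. exfalso. apply (Hh s Hc).
      * intros [s' [Hs' _]]. exfalso. apply Hnone. eauto.
  - assert (Hc : Cmul lam (Cinv lam) = Cone) by (apply Cinv_r; auto).
    destruct (realize_substitution f [Czero; Cinv lam]) as [h Hh].
    exists h. intros s. rewrite Hh. split.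
    + intros Hs. eexists. split; [apply Hs|].
      simpl. transitivity (Cmul s (Cmul lam (Cinv lam))); [rewrite Hc|]; ring.
    + intros [s' [Hs' ->]]. simpl.
      replace (Cadd Czero (Cmul (Cmul lam s') (Cadd (Cinv lam) (Cmul (Cmul lam s') Czero))))
        with (Cmul s' (Cmul lam (Cinv lam))) by ring.
      rewrite Hc. replace (Cmul s' Cone) with s' by ring. auto.
Qed.

End Realizations.

Theorem mainTheorem6 (n : nat) (b : nat -> PS)
  (Hb : forall j : nat, (1 <= j)%nat -> Convergent n (b j))
  (Hphi : Convergent (S n) (phiTX b))
  (Hb1 : b 1%nat (repeat 0%nat n) = Cone)
  (f : PS) (lam : CC) (cs : list CC) :
  exists g h : PS,
    (forall s : CC, Conv n b g s <-> Conv n b f (monic_eval cs s)) /\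
    (forall s : CC, Conv n b h s <-> exists s' : CC, Conv n b f s' /\ s = Cmul lam s').
Proof.
  destruct (realize_substitution b n Hb1 f (cs ++ [Cone])) as [g Hg].
  destruct (realize_scaled b n Hb1 f lam) as [h Hh].
  exists g, h. split; [|exact Hh].
  intros s. rewrite monic_eval_peval. apply Hg.
Qed.
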